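(* Let $r\in\mathbb{R}$. For all integers $n,m,k\ge 0$ with $n\ge m+k$, \[ \binom{m+k}{m} S_{2,r}(n,m+k) = \sum_{n_1=m}^n \sum_{l=0}^m \sum_{j=0}^k \binom{n_1}{l}\binom{n-n_1}{j}\binom{n}{n_1} r^{l+j} S_2(n_1-l,m-l)\, S_2(n-n_1-j,k-j). \]
   Context: $S_2(n,k)$ denotes the Stirling numbers of the second kind, $\frac{1}{k!}(e^t-1)^k = \sum_{n\ge k} S_2(n,k)\frac{t^n}{n!}$, with $S_2(a,b)=0$ whenever $a<b$, and $\binom{a}{b}=0$ for $b>a$. For $r\in\mathbb{R}$ and integer $k\ge 0$, the extended Stirling numbers of the second kind $S_{2,r}(n,k)$ are defined by $\frac{1}{k!}(e^t-1+rt)^k = \sum_{n=k}^\infty S_{2,r}(n,k)\frac{t^n}{n!}$. *)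

(* Formal power series with coefficients in a field R are
   represented as coefficient functions nat -> R. *)
From mathcomp Require Import all_boot all_order all_algebra.
Set Implicit Arguments. Unset Strict Implicit. Unset Printing Implicit Defensive.
Import Order.TTheory GRing.Theory Num.Theory.
Local Open Scope ring_scope.

Definition fps_mul (R : ringType) (f g : nat -> R) : nat -> R :=
  fun n => \sum_(i < n.+1) f i * g (n - i)%N.

Definition fps_one (R : ringType) : nat -> R := fun n => (n == 0)%:R.

Definition fps_pow (R : ringType) (f : nat -> R) (k : nat) : nat -> R :=
  iter k (fps_mul f) (@fps_one R).

(* coefficients of e^t - 1 + r t *)
Definition expm1_rt (R : fieldType) (r : R) : nat -> R :=
  fun i => (i != 0%N)%:R / (i`!)%:R + (i == 1%N)%:R * r.

(* extended Stirling numbers of the second kind: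
   (1/k!) (e^t - 1 + r t)^k = sum_n S_{2,r}(n,k) t^n / n! *)
Definition S2r (R : fieldType) (r : R) (n k : nat) : R :=
  (n`!)%:R / (k`!)%:R * fps_pow (expm1_rt r) k n.

Definition S2 (R : fieldType) (n k : nat) : R := S2r (0 : R) n k.

(* Since (e^t - 1 + r t)^(m+k) = (e^t - 1 + r t)^m (e^t - 1 + r t)^k, the
   exponential coefficients S_{2,r}(n, m+k) are a binomial convolution of those
   of the two factors, in which the terms with n1 < m vanish.  Expanding
   (e^t - 1 + r t)^j by the binomial theorem in r t then expresses each
   S_{2,r}(n1, j) through ordinary Stirling numbers.  The coefficients of degree
   at most n of these series are computed in {poly R}, after truncating
   e^t - 1 + r t at some degree N > n. *)
From mathcomp Require Import all_boot all_order all_algebra.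
From mathcomp Require Import ring zify.
Import Order.TTheory GRing.Theory Num.Theory.
Set Implicit Arguments. Unset Strict Implicit. Unset Printing Implicit Defensive.
Local Open Scope ring_scope.

Lemma coef_fps_pow (R : nzRingType) (f : nat -> R) (N k i : nat) : (i < N)%N ->
  fps_pow f k i = ((\poly_(j < N) f j) ^+ k)`_i.
Proof.
elim: k i => [|k IHk] i ltiN; first by rewrite /fps_pow /= /fps_one expr0 coef1.
rewrite /fps_pow iterS -/(fps_pow f k) exprS coefM /fps_mul.
apply: eq_bigr => j _.
have ltjN : (j < N)%N := leq_ltn_trans (ltnSE (ltn_ord j)) ltiN.
by rewrite coef_poly ltjN IHk // (leq_ltn_trans (leq_subr j i) ltiN).
Qed.

Lemma coef_expr_small (R : nzRingType) (p : {poly R}) (m i : nat) :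
  p`_0 = 0 -> (i < m)%N -> (p ^+ m)`_i = 0.
Proof.
move=> p0; elim: m i => [|m IHm] i // ltim.
rewrite exprS coefM big1 // => -[[|j] ltji] _; first by rewrite p0 mul0r.
by rewrite IHm ?mulr0 //=; lia.
Qed.

Definition expm1_rt_poly (R : fieldType) (r : R) (N : nat) : {poly R} :=
  \poly_(j < N) expm1_rt r j.

Lemma expm1_rt_polyE (R : fieldType) (r : R) (N : nat) : (1 < N)%N ->
  expm1_rt_poly r N = expm1_rt_poly 0 N + r *: 'X.
Proof.
move=> ltN1; apply/polyP => i.
rewrite coefD coefZ coefX !coef_poly /expm1_rt.
case: (ltnP i N) => [_|leNi]; first by rewrite mulr0 addr0 [r * _]mulrC.
by rewrite gtn_eqF ?mulr0 ?addr0 //; exact: leq_trans ltN1 leNi.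
Qed.

Lemma coef0_expm1_rt_poly (R : fieldType) (r : R) (N : nat) :
  (expm1_rt_poly r N)`_0 = 0.
Proof. by rewrite coef_poly /expm1_rt; case: ifP => //; rewrite !mul0r addr0. Qed.

Lemma S2r_poly (R : fieldType) (r : R) (N n k : nat) : (n < N)%N ->
  S2r r n k = (n`!)%:R / (k`!)%:R * ((expm1_rt_poly r N) ^+ k)`_n.
Proof. by move=> ltnN; rewrite /S2r (coef_fps_pow _ _ ltnN). Qed.

Lemma S2r_small (R : fieldType) (r : R) (n k : nat) : (n < k)%N -> S2r r n k = 0.
Proof.
move=> ltnk; rewrite (S2r_poly _ _ (ltnSn n)).
by rewrite coef_expr_small ?coef0_expm1_rt_poly ?mulr0.
Qed.

Section CharZero.

Variable R : numFieldType.

Lemma natr_fact_neq0 (n : nat) : (n`!)%:R != 0 :> R.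
Proof. by rewrite pnatr_eq0 -lt0n fact_gt0. Qed.

Lemma natr_bin_fact (n i : nat) : (i <= n)%N ->
  ('C(n, i))%:R = (n`!)%:R / ((i`!)%:R * ((n - i)`!)%:R) :> R.
Proof.
move=> lein; rewrite -(bin_fact lein) !natrM mulfK //.
by rewrite mulf_neq0 ?natr_fact_neq0.
Qed.

Lemma S2r_binomial (r : R) (n k : nat) :
  S2r r n k = \sum_(l < k.+1) ('C(n, l))%:R * r ^+ l * S2 R (n - l) (k - l).
Proof.
rewrite (S2r_poly _ _ (leqnSn n.+1)) expm1_rt_polyE // exprDn coef_sum mulr_sumr.
apply: eq_bigr => -[l /=]; rewrite ltnS => lelk _.
rewrite coefMn exprZn -scalerAr coefZ coefMXn.
have ltnl2 : (n - l < n.+2)%N by lia.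
rewrite /S2 (S2r_poly _ _ ltnl2).
case: (ltnP n l) => [ltnl|leln].
  by rewrite mulr0 mul0rn mulr0 (bin_small ltnl) !mul0r.
rewrite -[_ *+ 'C(k, l)]mulr_natr (natr_bin_fact lelk) (natr_bin_fact leln).
by field; rewrite !natr_fact_neq0.
Qed.

Lemma S2r_convolution (r : R) (n m k : nat) :
  ('C(m + k, m))%:R * S2r r n (m + k) =
  \sum_(0 <= i < n.+1) ('C(n, i))%:R * (S2r r i m * S2r r (n - i) k).
Proof.
rewrite big_mkord (S2r_poly _ _ (leqnSn n.+1)) exprD coefM !mulr_sumr.
apply: eq_bigr => -[i /=]; rewrite ltnS => lein _.
have ltin2 : (i < n.+2)%N by lia.
have ltni2 : (n - i < n.+2)%N by lia.
rewrite (S2r_poly _ _ ltin2) (S2r_poly _ _ ltni2).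
rewrite (natr_bin_fact lein) (natr_bin_fact (leq_addr k m)) addKn.
by field; rewrite !natr_fact_neq0.
Qed.

End CharZero.

Theorem mainTheorem6 (R : realFieldType) (r : R) (n m k : nat)
  (hn : (m + k <= n)%N) :
  ('C(m + k, m))%:R * S2r r n (m + k) =
  \sum_(m <= n1 < n.+1) \sum_(l < m.+1) \sum_(j < k.+1)
    ('C(n1, l))%:R * ('C(n - n1, j))%:R * ('C(n, n1))%:R * r ^+ (l + j)
      * S2 R (n1 - l) (m - l) * S2 R (n - n1 - j) (k - j).
Proof.
rewrite S2r_convolution (@big_cat_nat _ _ _ m) //=; last by lia.
rewrite big_nat_cond big1 => [|i /andP[/andP[_ ltim] _]]; last first.
  by rewrite S2r_small ?mul0r ?mulr0.
rewrite add0r; apply: eq_bigr => i _.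
rewrite !S2r_binomial big_distrl mulr_sumr; apply: eq_bigr => l _.
rewrite big_distrr mulr_sumr; apply: eq_bigr => j _.
by rewrite /= exprD; ring.
Qed.
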